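(* Suppose $\mathbf q$ is of type $a\in(3/2,5/2]$, let $\ell\ge1$, and let $\lambda>0$ satisfy $\lambda<\min_{k,m\ge1}k^{a-1}\big(\nu((-\infty,-k])-\nu(-k-m)\big)$ (such $\lambda$ exists). Then the process $$\widetilde M^{(\ell,\lambda)}_n=\frac{1}{h^\downarrow_\ell(P_\ell(n))}\exp\Big(\lambda\sum_{i=0}^{n-1}\frac{\mathbf 1_{P_\ell(i)\ge1}}{P_\ell(i)^{a-1}}\Big),\qquad n\ge0,$$ is a supermartingale with respect to the natural filtration of $P_\ell$.
   Context: $\mathbf q$ is a weight sequence for bipartite planar maps of type $a$: the total weight $W^{(\ell)}$ of maps with root face of degree $2\ell$ (weight $\prod_{f\ne f_r}q_{\deg f/2}$) is finite and $W^{(\ell)}\sim\frac{p_{\mathbf q}}2c_{\mathbf q}^{\ell+1}\ell^{-a}$. Let $\nu(k)=q_{k+1}c_{\mathbf q}^k$ for $k\ge0$ and $\nu(k)=2W^{(-1-k)}c_{\mathbf q}^k$ for $k<0$ (a probability measure on $\mathbb Z$). Let $h^\downarrow(p)=2^{-2p}\binom{2p}{p}$ and, for $\ell\ge1$, $h^\downarrow_\ell(p)=h^\downarrow(p)h^\downarrow(\ell)\frac{p}{p+\ell}$ for $p\ge1$ and $h^\downarrow_\ell(p)=\mathbf 1_{p=-\ell}$ for $p\le0$; $h^\downarrow_\ell$ is $\nu$-harmonic on $\mathbb Z_{\ge1}$. $(P_\ell(n))_{n\ge0}$ is the Markov chain started at $1$ with transitions $p\to p+k$ with probability $\nu(k)h^\downarrow_\ell(p+k)/h^\downarrow_\ell(p)$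 for $p\ge1$, absorbed at $-\ell$ (the perimeter process of the peeling of a Boltzmann map with root face of degree 2 and target face of degree $2\ell$). *)

From HB Require Import structures.
From mathcomp Require Import all_boot all_order all_algebra all_fingroup.
From mathcomp Require Import all_classical all_reals all_analysis.
Set Implicit Arguments. Unset Strict Implicit. Unset Printing Implicit Defensive.
Import Order.TTheory GRing.Theory Num.Theory.
Import numFieldNormedType.Exports.
Local Open Scope ring_scope.
Local Open Scope classical_set_scope.

Section Defs.
Variable R : realType.

(* ---------- Rooted bipartite planar maps as labelled rotation systems ------
   A map with m.+1 edges has 2(m.+1) darts, labelled by 'I_(m.*2.+2); the root
   dart is ord0.  s = vertex rotation, a = edge involution, faces = cycles of
   (a * s)%g : d |-> s (a d).  Every rooted map (trivial automorphism group)
   has exactly (2n-1)! labellings sending its root to ord0. *)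
Definition valid_map (m : nat) (s a : {perm 'I_(m.*2.+2)}) : bool :=
  [&& [forall d, (a (a d) == d) && (a d != d)],
      [forall x, forall y, connect (relU (frel s) (frel a)) x y],
      #|porbits s| + #|porbits (a * s)%g| == (m.+1 + 2)%N &
      [exists col : {ffun 'I_(m.*2.+2) -> bool},
         [forall d, (col (s d) == col d) && (col (a d) != col d)]]].

Definition map_weight (q : nat -> R) (m : nat) (s a : {perm 'I_(m.*2.+2)}) : R :=
  \prod_(F in porbits (a * s)%g | ord0 \notin F) q (#|F| %/ 2)%N.

Definition Wterm (q : nat -> R) (l m : nat) : R :=
  ((m.*2.+1)`!%:R)^-1 *
  \sum_(s : {perm 'I_(m.*2.+2)})
    \sum_(a : {perm 'I_(m.*2.+2)} |
            valid_map s a && (#|porbit (a * s)%g ord0| == l.*2))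
      map_weight q s a.

(* W^(l), as an extended real; W^(0) = 1 (vertex map) *)
Definition Wext (q : nat -> R) (l : nat) : \bar R :=
  if l == 0%N then 1%E else (\sum_(0 <= m <oo) (Wterm q l m)%:E)%E.

Definition W (q : nat -> R) (l : nat) : R := fine (Wext q l).

Definition W_ratio (q : nat -> R) (a p c : R) (l : nat) : R :=
  W q l / (p / 2 * c ^+ l.+1 * (l%:R `^ (- a))).

Definition type_a (q : nat -> R) (a p c : R) : Prop :=
  [/\ forall k, (0 < k)%N -> 0 <= q k,
      0 < p, 0 < c,
      forall l, (Wext q l < +oo)%E &
      W_ratio q a p c @ \oo --> (1 : R)].

Definition nu (q : nat -> R) (c : R) (k : int) : R :=
  if (0 <= k) then q (`|k|%N.+1) * c ^+ `|k|%N
  else 2 * W q (`|k|%N.-1) * c ^- `|k|%N.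

Definition nu_tail (q : nat -> R) (c : R) (k : nat) : R :=
  fine (\sum_(k <= j <oo) (nu q c (- j%:Z))%:E)%E.

Definition hdown (p : nat) : R := 2 ^- (p.*2) * 'C(p.*2, p)%:R.

Definition hl (l : nat) (p : int) : R :=
  if 0 < p then hdown `|p|%N * hdown l * (`|p|%N%:R / (`|p|%N%:R + l%:R))
  else (p == - l%:Z)%:R.

Definition Kl (q : nat -> R) (c : R) (l : nat) (x y : int) : R :=
  if 0 < x then nu q c (y - x) * hl l y / hl l x else (y == x)%:R.

Fixpoint path_prob_from (K : int -> int -> R) (x : int) (ys : seq int) : R :=
  if ys is y :: ys' then K x y * path_prob_from K y ys' else 1.

(* probability that (P_l(0),...,P_l(n)) = xs, for xs of size n.+1 *)
Definition Pl_law (q : nat -> R) (c : R) (l : nat) (xs : seq int) : R :=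
  if xs is x :: ys then (x == 1)%:R * path_prob_from (Kl q c l) x ys else 0.

(* the process tilde M^(l,lambda)_n as a function of the history xs of size n.+1 *)
Definition Mtilde (l : nat) (a lam : R) (n : nat) (xs : seq int) : R :=
  (hl l (last 0 xs))^-1 *
  expR (lam * \sum_(i < n) (if 0 < nth 0 xs i
                            then ((nth 0 xs i)%:~R `^ (a - 1))^-1 else 0)).

(* (Nonnegative) supermartingale w.r.t. the natural filtration of a discrete
   process with values in int, whose law on histories is Pr (Pr xs = probability
   that (X_0..X_n) = xs when size xs = n.+1), and X n is the value at time n as
   a function of the history up to time n.  Events of F_n are exactly
   {(X_0..X_n) in A} for A : set (seq int). *)
Definition nonneg_supermartingale (Pr : seq int -> R)
    (X : nat -> seq int -> R) : Prop :=
  [/\ forall n xs, 0 <= X n xs,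
      forall n, (\esum_(xs in [set xs | size xs = n.+1]) (Pr xs * X n xs)%:E
                   < +oo)%E &
      forall n (A : set (seq int)),
        (\esum_(xs in [set xs | size xs = n.+2 /\ A (take n.+1 xs)])
            (Pr xs * X n.+1 xs)%:E
         <= \esum_(xs in [set xs | size xs = n.+1 /\ A xs]) (Pr xs * X n xs)%:E)%E].

End Defs.

From HB Require Import structures.
From mathcomp Require Import all_boot all_order all_algebra all_fingroup.
From mathcomp Require Import all_classical all_reals all_analysis.
From mathcomp Require Import zify ring lra.
Import Order.TTheory GRing.Theory Num.Theory.
Local Open Scope ring_scope.
Local Open Scope classical_set_scope.

(* From a state k >= 1 the chain jumps to y with probability
   nu(y - k) h(y) / h(k), so
     E[1 / h(P(n+1)) | P(n) = k] = (1 / h(k)) * nu{y - k : h(y) <> 0}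
                                 = (1 / h(k)) * (1 - t_k),
   where t_k = nu((-oo,-k]) - nu(-k-l) is the probability of jumping into
   the region where h vanishes.  The exponential factor grows by
   exp(lam / k^(a-1)) and lam / k^(a-1) < t_k by the choice of lam, so
   exp(lam / k^(a-1)) (1 - t_k) <= exp(lam / k^(a-1) - t_k) <= 1.
   Absorbed states (k <= 0) contribute no drift. *)

Section esum_lemmas.
Context {R : realType}.

Lemma esum_single {T : choiceType} (S : set T) (f : T -> \bar R) (x0 : T) :
  S x0 -> (0 <= f x0)%E -> (forall x, S x -> x <> x0 -> f x = 0%E) ->
  \esum_(x in S) f x = f x0.
Proof.
move=> Sx0 f0 fz.
rewrite (esumID [set x0] S); last first.
  by move=> x Sx; have [->//|nx] := eqVneq x x0; rewrite fz //; apply/eqP.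
rewrite (_ : S `&` [set x0] = [set x0]); last first.
  by apply/seteqP; split => [y [_ ->]//|y ->]; split.
by rewrite esum_set1 // esum1 ?adde0 // => y [Sy ny]; apply: fz.
Qed.

Lemma esumZl_le {T : choiceType} (S : set T) (C : R) (b : T -> \bar R) :
  0 <= C -> (forall x, (0 <= b x)%E) ->
  (\esum_(x in S) (C%:E * b x) <= C%:E * \esum_(x in S) b x)%E.
Proof.
move=> C0 b0; apply: ge_ereal_sup => _ [X [finX XS] <-].
rewrite -ge0_mule_fsumr //; apply: lee_wpmul2l; first by rewrite lee_fin.
by apply: ereal_sup_ubound; exists X.
Qed.

Lemma esum_subr (V : zmodType) (f : V -> \bar R) (k : V) :
  \esum_(y in [set: V]) f (y - k) = \esum_(y in [set: V]) f y.
Proof.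
rewrite [RHS](reindex_esum [set: V] [set: V] (fun y => y - k)) //.
split=> //; first by move=> y z _ _ /addIr.
by move=> y _; exists (y + k) => //; rewrite addrK.
Qed.

Lemma esum_size_rcons (T : choiceType) (A : set (seq T)) n (F : seq T -> \bar R) :
  (forall xs, (0 <= F xs)%E) ->
  \esum_(xs in [set xs | size xs = n.+2 /\ A (take n.+1 xs)]) F xs =
  \esum_(xs in [set xs | size xs = n.+1 /\ A xs])
     \esum_(y in [set: T]) F (rcons xs y).
Proof.
move=> F0; rewrite esum_esum //.
rewrite (reindex_esum ([set xs | size xs = n.+1 /\ A xs] `*`` fun=> [set: T]) _
  (fun p => rcons p.1 p.2)) //.
split.
- move=> [xs y] /= [[sx Ax] _]; rewrite size_rcons sx.
  by rewrite -cats1 take_size_cat.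
- by move=> [x1 y1] [x2 y2] _ _ /= /rcons_inj [-> ->].
- move=> zs /= [+ +]; case/lastP: zs => [//|xs y].
  rewrite size_rcons => -[sx]; rewrite -cats1 take_size_cat // cats1 => Axs.
  by exists (xs, y).
Qed.

End esum_lemmas.

Lemma expR_mul_subr_le1 (R : realType) (s t : R) : s <= t -> expR s * (1 - t) <= 1.
Proof.
move=> st; apply: le_trans (_ : expR s * expR (- t) <= 1).
  by rewrite ler_wpM2l ?expR_ge0 // -[1 - t]/(1 + - t) expR_ge1Dx.
by rewrite -expRD expR_le1 subr_le0.
Qed.

Lemma path_prob_from_ge0 (R : realType) (K : int -> int -> R) x ys :
  (forall x y, 0 <= K x y) -> 0 <= path_prob_from K x ys.
Proof.
by move=> K0; elim: ys x => [|y ys IH] x /=; rewrite ?ler01 ?mulr_ge0.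
Qed.

Lemma path_prob_from_rcons (R : realType) (K : int -> int -> R) x ys y :
  path_prob_from K x (rcons ys y) = path_prob_from K x ys * K (last x ys) y.
Proof.
elim: ys x => [|z ys IH] x /=; first by rewrite mulr1 mul1r.
by rewrite IH mulrA.
Qed.

Lemma porbit_bipartite_half_gt0 (m : nat) (s a : {perm 'I_(m.*2.+2)}) F :
  valid_map s a -> F \in porbits (a * s)%g -> (0 < #|F| %/ 2)%N.
Proof.
case/and4P => _ _ _ /existsP[col /forallP col_alt] /imsetP[x _ ->].
suff : #|porbit (a * s)%g x| != 1%N by have := card_porbit_neq0 (a * s)%g x; lia.
apply/negP => /cards1P[y porbit_x].
have := mem_porbit (a * s)%g 1 x; have := porbit_id (a * s)%g x.
rewrite porbit_x !inE expg1 => /eqP <- /eqP; rewrite permM => ax_fixed.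
have /andP[/eqP col_s _] := col_alt (a x).
have /andP[_ col_a] := col_alt x.
by move: col_a; rewrite -col_s ax_fixed eqxx.
Qed.

Section harmonic_function.
Variables (R : realType) (l : nat).

Lemma hdown_gt0 p : 0 < @hdown R p.
Proof.
by rewrite /hdown mulr_gt0 ?invr_gt0 ?exprn_gt0 // ltr0n bin_gt0 -addnn leq_addr.
Qed.

Lemma hl_gt0 (p : int) : 0 < p -> 0 < hl R l p.
Proof.
move=> p_gt0; have abs_p : (0 < `|p|)%N by rewrite absz_gt0 gt_eqF.
rewrite /hl p_gt0 mulr_gt0 ?(mulr_gt0 (hdown_gt0 _) (hdown_gt0 _)) //.
by rewrite divr_gt0 ?ltr_wpDr ?ler0n // ltr0n.
Qed.

Lemma hl_nonpos (p : int) : p <= 0 -> hl R l p = (p == - l%:Z)%:R.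
Proof. by move=> p_le0; rewrite /hl ltNge p_le0. Qed.

Lemma hl_ge0 p : 0 <= hl R l p.
Proof.
by have [/hl_gt0/ltW//|/hl_nonpos->] := ltP 0 p; rewrite ler0n.
Qed.

Lemma hl_eq0 p : (hl R l p == 0) = (p <= 0) && (p != - l%:Z).
Proof.
have [/hl_gt0/gt_eqF//|p_le0] := ltP 0 p.
by rewrite hl_nonpos // pnatr_eq0 eqb0.
Qed.

End harmonic_function.

Section nonnegativity.
Variables (R : realType) (q : nat -> R) (c : R).
Hypotheses (q_ge0 : forall k, (0 < k)%N -> 0 <= q k) (c_gt0 : 0 < c).

Lemma Wterm_ge0 l m : 0 <= Wterm q l m.
Proof.
rewrite /Wterm mulr_ge0 ?invr_ge0 ?ler0n //.
apply: sumr_ge0 => s _; apply: sumr_ge0 => b /andP[smap _].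
apply: prodr_ge0 => F /andP[sF _]; apply: q_ge0.
exact: porbit_bipartite_half_gt0 smap sF.
Qed.

Lemma W_ge0 l : 0 <= W q l.
Proof.
rewrite /W fine_ge0 // /Wext; case: ifP => _; first exact: lee01.
by apply: nneseries_ge0 => n _ _; rewrite lee_fin Wterm_ge0.
Qed.

Lemma nu_ge0 k : 0 <= nu q c k.
Proof.
rewrite /nu; case: ifP => _.
  by rewrite mulr_ge0 ?exprn_ge0 ?(ltW c_gt0) ?q_ge0.
by rewrite !mulr_ge0 ?invr_ge0 ?exprn_ge0 ?(ltW c_gt0) ?W_ge0.
Qed.

Lemma Kl_ge0 l x y : 0 <= Kl q c l x y.
Proof.
rewrite /Kl; case: ifP => _; last exact: ler0n.
by rewrite divr_ge0 ?mulr_ge0 ?nu_ge0 ?hl_ge0.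
Qed.

Lemma Pl_law_ge0 l xs : 0 <= Pl_law q c l xs.
Proof.
case: xs => [|x ys] /=; first exact: lexx.
by rewrite mulr_ge0 ?ler0n // path_prob_from_ge0 // => *; apply: Kl_ge0.
Qed.

End nonnegativity.

Lemma Pl_law_rcons (R : realType) (q : nat -> R) c l xs y : xs != [::] ->
  Pl_law q c l (rcons xs y) = Pl_law q c l xs * Kl q c l (last 0 xs) y.
Proof. by case: xs => [//|x ys] _ /=; rewrite path_prob_from_rcons mulrA. Qed.

Definition kill_prob {R : realType} (q : nat -> R) (c : R) (l k : nat) : R :=
  nu_tail q c k - nu q c (- (k + l)%:Z).

Section one_step.
Variables (R : realType) (q : nat -> R) (c : R) (l : nat).
Hypotheses (q_ge0 : forall k, (0 < k)%N -> 0 <= q k) (c_gt0 : 0 < c).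
Hypothesis nu_sum1 : (\esum_(j in [set: int]) (nu q c j)%:E = 1)%E.

Lemma nu_tail_seriesE (k : nat) :
  (\sum_(k <= j <oo) (nu q c (- j%:Z))%:E =
   \esum_(y in [set y : int | (y <= 0)%R]) (nu q c (y - k%:Z))%:E)%E.
Proof.
rewrite ereal_series nneseries_esum; last by move=> j _; rewrite lee_fin nu_ge0.
rewrite (reindex_esum [set j | (k <= j)%N] _ (fun j : nat => k%:Z - j%:Z)).
  by apply: eq_esum => j _; rewrite addrAC subrr add0r.
split=> [j /=|i j /= _ _|y /= y_le0]; [lia|lia|].
by exists (k + `|y|)%N; rewrite /=; lia.
Qed.

Lemma esum_nu_survival (k : nat) :
  \esum_(y in [set y : int | hl R l y != 0]) (nu q c (y - k%:Z))%:E =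
  (1 - kill_prob q c l k)%:E.
Proof.
set u := fun y : int => (nu q c (y - k%:Z))%:E.
have u_ge0 y : (0 <= u y)%E by rewrite lee_fin nu_ge0.
set NZ := [set y : int | hl R l y != 0].
have total : (\esum_(y in NZ) u y + \esum_(y in ~` NZ) u y = 1)%E.
  have u_sum1 : (\esum_(y in [set: int]) u y = 1)%E.
    by rewrite (esum_subr _ (fun j => (nu q c j)%:E)).
  by rewrite -u_sum1 [RHS](esumID NZ) // !setTI.
have hl_zero_set : [set y : int | y <= 0] `&` ~` [set - l%:Z] = ~` NZ.
  apply/seteqP; split => y /=; rewrite /NZ /= hl_eq0.
    by move=> [-> y_nl]; apply/negP; rewrite negbK; apply/eqP.
  by move/negP; rewrite negbK => /andP[-> /eqP].
have tail : (\sum_(k <= j <oo) (nu q c (- j%:Z))%:E =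
             \esum_(y in ~` NZ) u y + (nu q c (- (k + l)%:Z))%:E)%E.
  rewrite nu_tail_seriesE (esumID [set - l%:Z]) => [|y _]; last exact: u_ge0.
  rewrite addeC.
  congr (_ + _)%E; first by congr esum; exact: hl_zero_set.
  rewrite (_ : _ `&` _ = [set - l%:Z]); last first.
    by apply/seteqP; split => [y []//|y /= ->]; split=> //=; lia.
  by rewrite esum_set1 ?lee_fin ?nu_ge0 // /u PoszD opprD addrC.
rewrite /kill_prob /nu_tail tail; move: total.
have := esum_ge0 (S := NZ) (fun y _ => u_ge0 y).
have := esum_ge0 (S := ~` NZ) (fun y _ => u_ge0 y).
case: (\esum_(y in NZ) u y)%E => [s| |]; case: (\esum_(y in ~` NZ) u y)%E => [z| |] //=.
by move=> _ _ /eqP; rewrite -EFinD eqe => /eqP sz; congr _%:E; lra.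
Qed.

Lemma esum_nu_hl_ratio (k : nat) :
  \esum_(y in [set: int]) (nu q c (y - k%:Z) * (hl R l y / hl R l y))%:E =
  (1 - kill_prob q c l k)%:E.
Proof.
rewrite -esum_nu_survival -(setTI [set y : int | hl R l y != 0]) esum_mkcondr.
apply: eq_esum => y _.
rewrite (_ : (y \in _) = (hl R l y != 0)); last by apply/idP/idP => [/set_mem|/mem_set].
case: ifPn => [hy|/negPn/eqP ->]; first by rewrite mulfV ?mulr1.
by rewrite mul0r mulr0.
Qed.

End one_step.

Definition pos_weight {R : realType} (a : R) (z : int) : R :=
  if 0 < z then (z%:~R `^ (a - 1))^-1 else 0.

Definition weighted_time {R : realType} (a : R) (n : nat) (xs : seq int) : R :=
  \sum_(i < n) pos_weight a (nth 0 xs i).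

Section Mtilde_lemmas.
Variables (R : realType) (l : nat) (a lam : R).

Lemma MtildeE n xs :
  Mtilde l a lam n xs = (hl R l (last 0 xs))^-1 * expR (lam * weighted_time a n xs).
Proof. by []. Qed.

Lemma Mtilde_ge0 n xs : 0 <= Mtilde l a lam n xs.
Proof. by rewrite MtildeE mulr_ge0 ?invr_ge0 ?hl_ge0 ?expR_ge0. Qed.

Lemma Mtilde_rcons n xs y : size xs = n.+1 ->
  Mtilde l a lam n.+1 (rcons xs y) =
  (hl R l y)^-1 * expR (lam * weighted_time a n xs) *
  expR (lam * pos_weight a (last 0 xs)).
Proof.
move=> sx; rewrite MtildeE last_rcons /weighted_time big_ord_recr /=.
have -> : \sum_(i < n) pos_weight a (rcons xs y)`_i = \sum_(i < n) pos_weight a xs`_i.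
  by apply: eq_bigr => i _; rewrite nth_rcons sx ltnS ltnW.
by rewrite nth_rcons sx ltnSn -nth_last sx mulrDr expRD mulrA.
Qed.

End Mtilde_lemmas.

Section supermartingale.
Variables (R : realType) (q : nat -> R) (a c : R) (l : nat) (lam : R).
Hypotheses (q_ge0 : forall k, (0 < k)%N -> 0 <= q k) (c_gt0 : 0 < c).
Hypothesis nu_sum1 : (\esum_(j in [set: int]) (nu q c j)%:E = 1)%E.
Hypothesis l_gt0 : (0 < l)%N.
Hypothesis lam_lt : forall k m : nat, (0 < k)%N -> (0 < m)%N ->
  lam < k%:R `^ (a - 1) * (nu_tail q c k - nu q c (- (k + m)%:Z)).

Lemma lam_pos_weight_lt_kill_prob (k : nat) :
  (0 < k)%N -> lam * pos_weight a k%:Z < kill_prob q c l k.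
Proof.
move=> k_gt0; have k_pow_gt0 : 0 < (k%:R : R) `^ (a - 1) by rewrite powR_gt0 ?ltr0n.
by rewrite /pos_weight ltz_nat k_gt0 ltr_pdivrMr // mulrC; exact: lam_lt.
Qed.

Lemma esum_Pl_law_Mtilde_rcons_le n xs : size xs = n.+1 ->
  (\esum_(y in [set: int])
      (Pl_law q c l (rcons xs y) * Mtilde l a lam n.+1 (rcons xs y))%:E
   <= (Pl_law q c l xs * Mtilde l a lam n xs)%:E)%E.
Proof.
move=> sx; have xs_nil : xs != [::] by case: xs sx.
under eq_esum => y _ do rewrite Pl_law_rcons // Mtilde_rcons //.
rewrite MtildeE.
have P_ge0 : 0 <= Pl_law q c l xs by exact: Pl_law_ge0.
have E_ge0 := expR_ge0 (lam * weighted_time a n xs).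
have [x_le0|x_gt0] := leP (last 0 xs) 0.
  rewrite (esum_single _ _ (last 0 xs)) //.
  - rewrite /Kl ltNge x_le0 eqxx /pos_weight ltNge x_le0 /=.
    by rewrite mulr0 expR0 !mulr1 mulrA.
  - by rewrite lee_fin !mulr_ge0 ?Kl_ge0 ?invr_ge0 ?hl_ge0.
  - by move=> y _ /eqP yx; rewrite /Kl ltNge x_le0 /= (negbTE yx) mulr0 mul0r.
have [k xk] : exists k : nat, last 0 xs = k%:Z.
  by exists (absz (last 0 xs)); rewrite gtz0_abs.
rewrite xk in x_gt0 *; have k_gt0 : (0 < k)%N by rewrite -ltz_nat.
set P := Pl_law q c l xs; set E := expR _; set G := expR (lam * pos_weight a k).
have bodyE y : (P * Kl q c l k y * ((hl R l y)^-1 * E * G))%:E =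
    ((P / hl R l k * E * G)%:E * (nu q c (y - k%:Z) * (hl R l y / hl R l y))%:E)%E.
  by rewrite /Kl x_gt0 -EFinM; congr _%:E; ring.
under eq_esum => y _ do rewrite bodyE.
have C_ge0 : 0 <= P / hl R l k * E * G.
  by rewrite !mulr_ge0 ?invr_ge0 ?hl_ge0 ?expR_ge0.
have mass_ge0 y : (0 <= (nu q c (y - k%:Z) * (hl R l y / hl R l y))%:E)%E.
  by rewrite lee_fin mulr_ge0 ?nu_ge0 ?mulr_ge0 ?invr_ge0 ?hl_ge0.
apply: le_trans (esumZl_le _ _ _ C_ge0 mass_ge0) _.
rewrite esum_nu_hl_ratio // -EFinM lee_fin.
have -> : P * ((hl R l k)^-1 * E) = P / hl R l k * E * 1 by rewrite mulr1 mulrA.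
rewrite -(mulrA (P / hl R l k * E)); apply: ler_wpM2l.
  by rewrite !mulr_ge0 ?invr_ge0 ?hl_ge0.
exact/expR_mul_subr_le1/ltW/lam_pos_weight_lt_kill_prob.
Qed.

Lemma Mtilde_supermartingale_step n (A : set (seq int)) :
  (\esum_(xs in [set xs | size xs = n.+2 /\ A (take n.+1 xs)])
      (Pl_law q c l xs * Mtilde l a lam n.+1 xs)%:E
   <= \esum_(xs in [set xs | size xs = n.+1 /\ A xs])
      (Pl_law q c l xs * Mtilde l a lam n xs)%:E)%E.
Proof.
rewrite esum_size_rcons => [|xs].
  by apply: le_esum => xs [sx _]; exact: esum_Pl_law_Mtilde_rcons_le.
by rewrite lee_fin mulr_ge0 ?Pl_law_ge0 ?Mtilde_ge0.
Qed.

Lemma esum_Pl_law_Mtilde_lt_pinfty n :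
  (\esum_(xs in [set xs | size xs = n.+1])
      (Pl_law q c l xs * Mtilde l a lam n xs)%:E < +oo)%E.
Proof.
elim: n => [|n IH].
  rewrite (esum_single _ _ [:: 1]) ?ltry //.
  - by rewrite lee_fin mulr_ge0 ?Pl_law_ge0 ?Mtilde_ge0.
  - move=> [|x [|? ?]] //= _ x_neq1.
    by case: eqP => [x1|_]; [rewrite x1 in x_neq1 | rewrite !mul0r].
apply: le_lt_trans IH; have := Mtilde_supermartingale_step n setT.
rewrite (_ : [set xs | size xs = n.+2 /\ setT (take n.+1 xs)] =
             [set xs | size xs = n.+2]); last by apply/seteqP; split=> xs /= => [[]|].
rewrite (_ : [set xs | size xs = n.+1 /\ setT xs] = [set xs | size xs = n.+1]) //.
by apply/seteqP; split=> xs /= => [[]|].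
Qed.

End supermartingale.

Theorem mainTheorem7 (R : realType) (q : nat -> R) (a p c : R) (l : nat) (lam : R) :
  type_a q a p c ->
  3 / 2 < a <= 5 / 2 ->
  (\esum_(k in [set: int]) (nu q c k)%:E = 1)%E ->
  (forall x : int, 0 < x ->
     (\esum_(k in [set: int]) (nu q c k * @hl R l (x + k))%:E = (@hl R l x)%:E)%E) ->
  (0 < l)%N ->
  0 < lam ->
  (forall k m : nat, (0 < k)%N -> (0 < m)%N ->
     lam < k%:R `^ (a - 1) * (nu_tail q c k - nu q c (- (k + m)%:Z))) ->
  nonneg_supermartingale (Pl_law q c l) (@Mtilde R l a lam).
Proof.
move=> [q_ge0 _ c_gt0 _ _] _ nu_sum1 _ l_gt0 _ lam_lt.
split.
- exact: Mtilde_ge0.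
- exact: esum_Pl_law_Mtilde_lt_pinfty.
- exact: Mtilde_supermartingale_step.
Qed.
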